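(* Let $f: \mathbb{R}^n \to \mathbb{R}^n$ be topical, $\lambda \in \mathbb{R}$ and $k \ge 1$. There is a function $H^k: \mathbb{R}\cup\{-\infty\} \to \mathbb{R}\cup\{-\infty\}$ such that for every vertex $X$ of $\mathcal{G}^k(f)$ lying in a strongly connected component of $\mathcal{G}^k(f)$ — more precisely, for every strongly connected component $\mathcal{X}$ of $\mathcal{G}^k(f)$ — for all $i,j \in \bigcup_{X\in\mathcal{X}}\sigma(X)$ and all $x \in \mathbb{R}^n$: if $f(x) \le \lambda + x$ and $x \ge 0$, then $x_j \le H^k(x_i)$.
   Context: $f$ is topical if $f(x+h) = f(x)+h$ for all $h\in\mathbb{R}$ (scalar added to each coordinate) and $x\le y$ componentwise implies $f(x)\le f(y)$. $e_J$ is the characteristic vector of $J\subseteq\{1,\dots,n\}$. Aggregated graphs: $\mathcal{G}^1(f)$ is the directed graph on $\{1,\dots,n\}$ with an edge $i\to j$ iff $\lim_{u\to\infty} f_i(u e_{\{j\}}) = \infty$, with $\sigma(i) = \{i\}$. For $k\ge2$, the vertices of $\mathcal{G}^k(f)$ are the strongly connected components of $\mathcal{G}^{k-1}(f)$, a component $X$ being associated with $\sigma(X) = \bigcup_{Y\in X}\sigma(Y)$; there is an edge $I\to J$ in $\mathcal{G}^k(f)$ iff there exists $i\in\sigma(I)$ with $\lim_{u\to\infty} f_i(u e_{\sigma(J)}) = \infty$. A strongly connected component is an equivalence class under: $X$ communicates with $Y$ iff $X=Y$ or there are directed paths both from $X$ to $Y$ and from $Y$ to $X$. *)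

From HB Require Import structures.
From mathcomp Require Import all_boot all_order all_algebra.
From mathcomp Require Import all_classical all_reals all_analysis.
Set Implicit Arguments. Unset Strict Implicit. Unset Printing Implicit Defensive.
Import Order.TTheory GRing.Theory Num.Theory.
Local Open Scope ring_scope.

Section Aggregated.
Variables (R : realType) (n : nat).
Variable f : ('I_n -> R) -> ('I_n -> R).

Definition topical : Prop :=
  (forall (x : 'I_n -> R) (h : R) (l : 'I_n), f (fun j => x j + h) l = f x l + h) /\
  (forall x y : 'I_n -> R, (forall j, x j <= y j) -> forall l, f x l <= f y l).

Definition char_vec (J : {set 'I_n}) (u : R) : 'I_n -> R :=
  fun j => if j \in J then u else 0.

Definition diverges (i : 'I_n) (J : {set 'I_n}) : Prop :=
  ((fun u : R => f (char_vec J u) i) @ +oo%R --> +oo%R)%classic.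

(* A vertex of an aggregated graph is represented by its sigma-set
   (a subset of 'I_n); L is the set of (sigma-sets of) vertices. *)
Definition agg_edge (L : {set {set 'I_n}}) : rel {set 'I_n} :=
  fun I J => [&& I \in L, J \in L & `[< exists2 i, i \in I & diverges i J >]].

Definition communicate (L : {set {set 'I_n}}) (I J : {set 'I_n}) : bool :=
  (I == J) || (connect (agg_edge L) I J && connect (agg_edge L) J I).

Definition scc_sigma (L : {set {set 'I_n}}) (I : {set 'I_n}) : {set 'I_n} :=
  \bigcup_(J in L | communicate L I J) J.

Definition next_level (L : {set {set 'I_n}}) : {set {set 'I_n}} :=
  [set scc_sigma L I | I in L].

(* vertex sets of G^1, G^2, ...: agg_level m = vertices of G^(m+1) *)
Fixpoint agg_level (m : nat) : {set {set 'I_n}} :=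
  match m with
  | 0 => [set [set i] | i : 'I_n]
  | m'.+1 => next_level (agg_level m')
  end.

Definition Gk (k : nat) : {set {set 'I_n}} := agg_level k.-1.

End Aggregated.

From HB Require Import structures.
From mathcomp Require Import all_boot all_order all_algebra.
From mathcomp Require Import all_classical all_reals all_analysis.
Set Implicit Arguments. Unset Strict Implicit. Unset Printing Implicit Defensive.
Import Order.TTheory GRing.Theory Num.Theory.
Local Open Scope ring_scope.

(* Say that i controls j when x_j is bounded by a nondecreasing function of
   x_i, uniformly over the nonnegative x with f x <= lam + x; control is a
   preorder.  If f_i (u e_J) diverges, then, writing m for the minimum of x
   over J, monotonicity gives f_i (m e_J) <= f_i x <= lam + x_i, so x_i
   controls m; when the indices of J control each other, i thus controls all
   of J.  Since every vertex of an SCC reaches every other, induction on the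
   level shows that the indices of sigma of any SCC control each other, and
   the finitely many control functions are summed into one. *)

Lemma cvgry_preimage_bounded (R : realType) (phi : R -> R) :
  (phi @ +oo --> +oo)%classic ->
  exists G : R -> R, {homo G : a b / a <= b} /\ forall u t, phi u <= t -> u <= G t.
Proof.
move=> phi_oo.
have thresholds (N : nat) : exists M : R, 0 <= M /\ forall u, M <= u -> N%:R < phi u.
  have [M [_ HM]] := (cvgryPge _).1 phi_oo (N%:R + 1).
  exists (Num.max M 0 + 1); split; first by rewrite addr_ge0 // le_max lexx orbT.
  move=> u Mu; apply: (@lt_le_trans _ _ (N%:R + 1)); first by rewrite ltrDl ltr01.
  by apply: HM; apply: lt_le_trans Mu; rewrite ltr_pwDr ?le_max ?lexx.
have [M hM] := choice thresholds.
pose G (t : R) := \sum_(0 <= k < (Num.truncn t).+2) M k.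
have M_ge0 k : 0 <= M k by case: (hM k).
exists G; split.
  move=> a b ab; have le_ab := le_truncn ab.
  rewrite /G [leRHS](@big_cat_nat _ _ _ (Num.truncn a).+2) //=.
  by rewrite lerDl; apply: sumr_ge0.
move=> u t phi_le.
(* N := truncn t + 1 exceeds t >= phi u, so u lies below the threshold M N. *)
have u_lt : u < M (Num.truncn t).+1.
  rewrite ltNge; apply/negP => /(hM _).2.
  by rewrite ltNge (le_trans phi_le) // ltW // truncnS_gt.
apply/ltW/(lt_le_trans u_lt).
by rewrite /G big_nat_recr //= lerDr; apply: sumr_ge0.
Qed.

Section Control.
Variables (R : realType) (n : nat) (f : ('I_n -> R) -> ('I_n -> R)) (lam : R).
Hypothesis f_monotone :
  forall x y : 'I_n -> R, (forall j, x j <= y j) -> forall l, f x l <= f y l.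

Definition subeigen (x : 'I_n -> R) :=
  (forall l, f x l <= lam + x l) /\ (forall l, 0 <= x l).

Definition controls (i j : 'I_n) := exists G : R -> R,
  [/\ forall t, 0 <= G t, {homo G : a b / a <= b}
    & forall x, subeigen x -> x j <= G (x i)].

Definition controlled_set (J : {set 'I_n}) :=
  forall j j', j \in J -> j' \in J -> controls j j'.

(* Nonemptiness lets control be chained through the intermediate vertices of a path. *)
Definition controlled_level (L : {set {set 'I_n}}) :=
  forall I, I \in L -> (exists a, a \in I) /\ controlled_set I.

Lemma controls_refl i : controls i i.
Proof.
exists (fun t => Num.max t 0); split; first by move=> t; rewrite le_max lexx orbT.
  by move=> a b ab; rewrite ge_max !le_max ab lexx orbT.
by move=> x _; rewrite le_max lexx.
Qed.

Lemma controls_trans i j k : controls i j -> controls j k -> controls i k.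
Proof.
move=> [G1 [_ G1_homo G1_bd]] [G2 [G2_ge0 G2_homo G2_bd]].
exists (G2 \o G1); split=> [t|a b ab|x x_sub] /=; first exact: G2_ge0.
  exact/G2_homo/G1_homo.
exact: le_trans (G2_bd x x_sub) (G2_homo _ _ (G1_bd x x_sub)).
Qed.

Lemma controls_uniform : exists U : R -> R, {homo U : a b / a <= b} /\
  forall i j, controls i j -> forall x, subeigen x -> x j <= U (x i).
Proof.
have pair_fun (p : 'I_n * 'I_n) : exists G : R -> R,
    [/\ forall t, 0 <= G t, {homo G : a b / a <= b}
      & controls p.1 p.2 -> forall x, subeigen x -> x p.2 <= G (x p.1)].
  case: (pselect (controls p.1 p.2)) => [[G [G_ge0 G_homo G_bd]]|not_c].
    by exists G; split.
  by exists (fun=> 0); split=> // /not_c.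
have [G hG] := choice pair_fun.
have G_ge0 p t : 0 <= G p t by case: (hG p).
exists (fun t => \sum_p G p t); split.
  by move=> a b ab; apply: ler_sum => p _; case: (hG p) => _ + _; apply.
move=> i j cij x x_sub; case: (hG (i, j)) => _ _ /(_ cij x x_sub) /le_trans; apply.
by rewrite (bigD1 (i, j)) //= lerDl; apply: sumr_ge0.
Qed.

Lemma diverges_bounds_min i J : diverges f i J ->
  exists G : R -> R, {homo G : a b / a <= b} /\
  forall x, subeigen x -> forall j0, j0 \in J ->
    (forall j, j \in J -> x j0 <= x j) -> x j0 <= G (x i).
Proof.
move=> /cvgry_preimage_bounded [G [G_homo G_bd]].
exists (fun t => G (lam + t)); split; first by move=> a b ab; rewrite G_homo ?lerD2l.
move=> x [fx x_ge0] j0 j0J j0_min; apply: G_bd.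
apply: le_trans (fx i); apply: f_monotone => l; rewrite /char_vec.
by case: ifP => [/j0_min|_].
Qed.

Lemma diverges_controls i J j : diverges f i J -> controlled_set J ->
  j \in J -> controls i j.
Proof.
move=> /diverges_bounds_min [G [G_homo G_bd]] J_ctrl jJ.
have [U [U_homo U_bd]] := controls_uniform.
exists (fun t => Num.max (U (G t)) 0); split=> [t|a b ab|x x_sub].
- by rewrite le_max lexx orbT.
- by rewrite ge_max !le_max lexx orbT U_homo ?G_homo.
have [j0 j0J j0_min] := arg_minP x jJ.
apply: le_trans (U_bd _ _ (J_ctrl _ _ j0J jJ) x x_sub) _.
by rewrite le_max U_homo ?G_bd.
Qed.

Lemma edge_controls L I J : controlled_level L -> agg_edge f L I J ->
  forall i j, i \in I -> j \in J -> controls i j.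
Proof.
move=> L_ctrl /and3P [IL JL /asboolP [i0 i0I i0_J]] i j iI jJ.
apply: controls_trans ((L_ctrl I IL).2 _ _ iI i0I) _.
exact: diverges_controls i0_J (L_ctrl J JL).2 jJ.
Qed.

Lemma connect_controls L I J : controlled_level L -> I \in L ->
  connect (agg_edge f L) I J -> forall i j, i \in I -> j \in J -> controls i j.
Proof.
move=> L_ctrl + /connectP [p + ->]; elim: p I => [|K p IHp] I IL /=.
  by move=> _; exact: (L_ctrl I IL).2.
case/andP => IK K_p i j iI jp.
have KL : K \in L by case/and3P: IK.
have [[k kK] _] := L_ctrl K KL.
exact: controls_trans (edge_controls L_ctrl IK iI kK) (IHp K KL K_p k j kK jp).
Qed.

Lemma scc_sigma_controlled L X : controlled_level L -> X \in L ->
  controlled_set (scc_sigma f L X).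
Proof.
move=> L_ctrl XL i j /bigcupP [I /andP [IL cXI] iI] /bigcupP [J /andP [JL cXJ] jJ].
apply: connect_controls L_ctrl IL _ _ _ iI jJ; apply: (@connect_trans _ _ X).
  by case/orP: cXI => [/eqP ->|/andP [_ ->]].
by case/orP: cXJ => [/eqP <-|/andP [-> _]].
Qed.

Lemma next_level_controlled L : controlled_level L -> controlled_level (next_level f L).
Proof.
move=> L_ctrl _ /imsetP [X XL ->]; split; last exact: scc_sigma_controlled.
have [[a aX] _] := L_ctrl X XL; exists a.
by apply/bigcupP; exists X; rewrite ?XL /communicate ?eqxx.
Qed.

Lemma agg_level_controlled m : controlled_level (agg_level f m).
Proof.
elim: m => [|m IHm]; last exact: next_level_controlled.
move=> _ /imsetP [a _ ->]; split; first by exists a; rewrite inE.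
by move=> i j; rewrite !inE => /eqP -> /eqP ->; exact: controls_refl.
Qed.

End Control.

Theorem lemma3p4 (R : realType) (n : nat) (f : ('I_n -> R) -> ('I_n -> R))
    (hf : topical f) (lam : R) (k : nat) (hk : (1 <= k)%N) :
  exists H : \bar R -> \bar R,
    (forall t, H t != +oo%E) /\
    forall X : {set 'I_n}, X \in Gk f k ->
    forall i j : 'I_n,
      i \in scc_sigma f (Gk f k) X -> j \in scc_sigma f (Gk f k) X ->
    forall x : 'I_n -> R,
      (forall l, f x l <= lam + x l) -> (forall l, 0 <= x l) ->
      ((x j)%:E <= H (x i)%:E)%E.
Proof.
have [_ f_monotone] := hf.
have [U [_ U_bd]] := controls_uniform f lam.
exists (fun t => (U (fine t))%:E); split=> // X XG i j iX jX x fx x_ge0.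
rewrite lee_fin; apply: U_bd; last by split.
rewrite /Gk in XG iX jX.
have level_ctrl := agg_level_controlled lam f_monotone (m := k.-1).
have scc_ctrl := scc_sigma_controlled f_monotone level_ctrl XG.
exact: scc_ctrl iX jX.
Qed.
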